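(* Let $E\subseteq\mathbb{R}$ be a measurable weakly nowhere dense set. Then the set $D_L(E)$ of points of $E$ which are left density points of $E$ is of first category in $E$ (with the subspace topology), and likewise the set $D_R(E)$ of points of $E$ which are right density points of $E$ is of first category in $E$.
   Context: $|A|$ denotes Lebesgue measure. A set $E\subseteq\mathbb{R}$ is weakly nowhere dense if for every (nondegenerate) interval $J$ the set $E\cap J$ does not have full measure in $J$, i.e. $|J\setminus E|>0$. A point $x$ is a left (resp. right) density point of $E$ if for every sequence of intervals $I_n=[x-r_n,x]$ (resp. $I_n=[x,x+r_n]$) with $r_n\searrow0$ we have $|E\cap I_n|/|I_n|\to1$. *)

From mathcomp Require Import all_boot all_algebra all_classical all_reals all_analysis.
Import numFieldNormedType.Exports.
Set Implicit Arguments. Unset Strict Implicit. Unset Printing Implicit Defensive.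
Import GRing.Theory Num.Theory.
Local Open Scope classical_set_scope.
Local Open Scope ring_scope.

(* Lebesgue measurable sets: Caratheodory-measurable sets of the Lebesgue
   outer measure (= the completed Lebesgue sigma-algebra). *)
Definition lebesgue_measurable {R : realType} (E : set R) : Prop :=
  ((wlength (R:=R) idfun)^*%mu).-cara.-measurable E.

Notation leb := (@completed_lebesgue_measure _).

Definition weakly_nowhere_dense {R : realType} (E : set R) : Prop :=
  forall a b : R, a < b -> (0 < leb (`[a, b] `\` E))%E.

Definition left_density_point {R : realType} (E : set R) (x : R) : Prop :=
  forall r : R^nat, (forall n, 0 < r n) -> {homo r : n m / (n <= m)%N >-> m <= n} ->
    r @ \oo --> (0 : R) ->
    (fun n => fine (leb (E `&` `[x - r n, x])) / r n) @ \oo --> (1 : R).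

Definition right_density_point {R : realType} (E : set R) (x : R) : Prop :=
  forall r : R^nat, (forall n, 0 < r n) -> {homo r : n m / (n <= m)%N >-> m <= n} ->
    r @ \oo --> (0 : R) ->
    (fun n => fine (leb (E `&` `[x, x + r n])) / r n) @ \oo --> (1 : R).

Definition nowhere_dense {T : topologicalType} (A : set T) : Prop :=
  (closure A)° = set0.

Definition first_category {T : topologicalType} (A : set T) : Prop :=
  exists F : (set T)^nat, (forall n, nowhere_dense (F n)) /\ A = \bigcup_n F n.

Definition DL {R : realType} (E : set R) : set (subspace E) :=
  [set x | E x /\ left_density_point E x].
Definition DR {R : realType} (E : set R) : set (subspace E) :=
  [set x | E x /\ right_density_point E x].
Arguments DL {R} E.
Arguments DR {R} E.

From mathcomp Require Import all_boot all_order all_algebra all_classical all_reals all_analysis.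
From mathcomp.algebra_tactics Require Import lra.
Import numFieldNormedType.Exports.
Set Implicit Arguments. Unset Strict Implicit. Unset Printing Implicit Defensive.
Import Order.TTheory GRing.Theory Num.Theory.
Local Open Scope classical_set_scope.
Local Open Scope ring_scope.

(* Cut D_L(E) into the layers of points s with |E ∩ [s - h, s]| >= h/2 for all
   0 < h < 1/(n+1); every left density point lies in some layer.  No layer is
   dense in a piece E ∩ (x0 - eps, x0 + eps) of E.  Indeed E misses a set of
   positive measure in every interval, so the Lebesgue density theorem, applied
   to a Borel hull of E, yields y < x0 and a scale r with
   |E ∩ [y - r, y + r]| <= r/10.  Let b = inf (E ∩ [y, +oo)).  A layer point s
   close to b would see in [s - r/2, s] only E ∩ [y - r, y] and a short piece
   of [b, s], as E misses [y, b): less than r/4 in total.  Right density points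
   reduce to left ones under x |-> -x; this is why the estimate is proved for
   any monotone subadditive set function bounded by length on intervals. *)

Section length_bounded_outer.
Context {R : realType}.
Implicit Types (mu : set R -> \bar R) (E : set R).

Definition length_bounded_outer mu : Prop :=
  [/\ {homo mu : A B / A `<=` B >-> (A <= B)%E},
      forall A B, (mu (A `|` B) <= mu A + mu B)%E &
      forall a b : R, a <= b -> (mu `[a, b]%classic <= (b - a)%:E)%E].

Definition everywhere_sparse mu E : Prop :=
  forall a b e : R, a < b -> 0 < e -> exists y r : R, [/\ a < y < b, 0 < r < e &
    (mu (E `&` `[(y - r)%R, (y + r)%R]) <= (r / 10)%:E)%E].

Lemma length_bounded_outer_leb : length_bounded_outer leb.
Proof.
split => [A B AB|A B|a b ab]; [exact: le_outer_measure | exact: outer_measureU2 |].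
rewrite (_ : leb `[a, b] = lebesgue_measure `[a, b]) // lebesgue_measure_itv /= lte_fin.
by case: ltP; rewrite // lee_fin subr_ge0.
Qed.

Lemma length_bounded_outer_opp mu : length_bounded_outer mu ->
  length_bounded_outer (fun A => mu (-%R @^-1` A)).
Proof.
move=> [mu_le mu_U2 mu_itv]; split => [A B AB|A B|a b ab].
- by apply: mu_le => x /AB.
- exact: mu_U2.
- by rewrite opp_preimage_itvbndbnd /= (le_trans (mu_itv _ _ _)) ?opprK ?lerN2 // addrC.
Qed.

Lemma preimage_opp_setI_itv E (a b : R) :
  -%R @^-1` (-%R @^-1` E `&` `[a, b]) = E `&` `[- b, - a].
Proof.
rewrite preimage_setI opp_preimage_itvbndbnd; congr (_ `&` _).
by apply/funext => x /=; rewrite opprK.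
Qed.

Lemma everywhere_sparse_opp mu E : everywhere_sparse mu E ->
  everywhere_sparse (fun A => mu (-%R @^-1` A)) (-%R @^-1` E).
Proof.
move=> sparse a b e ab e0.
have [y [r [/andP[y1 y2] re Er]]] := sparse (- b) (- a) e ltac:(lra) e0.
exists (- y), r; split => //; first by apply/andP; split; lra.
by rewrite preimage_opp_setI_itv !opprD !opprK.
Qed.

End length_bounded_outer.

Lemma closure_preimage_opp {R : realType} (S : set R) :
  -%R @^-1` closure S `<=` closure (-%R @^-1` S).
Proof.
move=> z /= Sz B /nbhs_ballP[e /= e0 zeB].
have [s [Ss ezs]] := Sz _ (nbhsx_ballx (- z) e e0).
exists (- s); split; rewrite /= ?opprK //; apply: zeB.
by move: ezs; rewrite /ball /= -opprD normrN opprK.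
Qed.

Section left_layer_not_dense.
Context {R : realType} (mu : set R -> \bar R).
Hypothesis hmu : length_bounded_outer mu.

Lemma left_layer_not_dense (E S : set R) (c x0 eps : R) :
  0 < c -> 0 < eps -> E x0 -> everywhere_sparse mu E ->
  (forall s, S s -> forall h, 0 < h < c -> ((h / 2)%:E <= mu (E `&` `[(s - h)%R, s]))%E) ->
  ~ (E `&` ball x0 eps `<=` closure S).
Proof.
have [mu_le mu_U2 mu_itv] := hmu.
move=> c0 eps0 Ex0 sparse layer dense.
have [y [r [/andP[y1 y2] /andP[r0]]]] := sparse (x0 - eps / 2) x0 (Num.min c eps)
  ltac:(lra) ltac:(by rewrite lt_min c0 eps0).
rewrite lt_min => /andP[rc reps] Ey.
pose T := E `&` [set z | y <= z].
have Tx0 : T x0 by split => /=; [|lra].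
have T0 : T !=set0 by exists x0.
have Tlb : has_lbound T by exists y => z [].
pose b := inf T.
have yb : y <= b by apply: lb_le_inf => // z [].
have bx0 : b <= x0 := ge_inf Tlb Tx0.
have [z [Ez /= yz] zb] := inf_lt T0 (x := b + r / 20) ltac:(lra).
have : closure S z.
  by apply: dense; split => //; rewrite /ball /= ltr_distlC; apply/andP; split; lra.
move=> /(_ _ (nbhsx_ballx z (r / 20) ltac:(lra))) [s [Ss]].
rewrite /ball /= ltr_distlC => /andP[zs sz].
have lower := layer s Ss (r / 2) ltac:(lra).
suff upper : (mu (E `&` `[(s - r / 2)%R, s]) < (r / 2 / 2)%:E)%E.
  by move: lower; rewrite leNgt upper.
have cover : E `&` `[s - r / 2, s] `<=` (E `&` `[y - r, y + r]) `|` `[b, b + r / 10].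
  move=> x [Ex]; rewrite /= !in_itv /= => /andP[x1 x2].
  have [xy|yx] := ltP x y; [left | right].
    by split => //; apply/andP; split; lra.
  have bx : b <= x := ge_inf Tlb (conj Ex yx).
  by apply/andP; split; lra.
apply: (le_lt_trans (mu_le _ _ cover)); apply: (le_lt_trans (mu_U2 _ _)).
apply: (le_lt_trans (leeD Ey (mu_itv _ _ _))); first lra.
by rewrite -EFinD lte_fin; lra.
Qed.

End left_layer_not_dense.

Section right_layer_not_dense.
Context {R : realType} (mu : set R -> \bar R).
Hypothesis hmu : length_bounded_outer mu.

Lemma right_layer_not_dense (E S : set R) (c x0 eps : R) :
  0 < c -> 0 < eps -> E x0 -> everywhere_sparse mu E ->
  (forall s, S s -> forall h, 0 < h < c -> ((h / 2)%:E <= mu (E `&` `[s, (s + h)%R]))%E) ->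
  ~ (E `&` ball x0 eps `<=` closure S).
Proof.
move=> c0 eps0 Ex0 sparse layer dense.
apply: (left_layer_not_dense (length_bounded_outer_opp hmu)
  (E := -%R @^-1` E) (S := -%R @^-1` S) (x0 := - x0) c0 eps0).
- by rewrite /= opprK.
- exact: everywhere_sparse_opp.
- move=> s Ss h hc; rewrite preimage_opp_setI_itv opprD !opprK.
  exact: layer.
- move=> z [Ez x0z]; apply: closure_preimage_opp; apply: dense; split => //.
  by move: x0z; rewrite /ball /= -opprD normrN opprK.
Qed.

End right_layer_not_dense.

Lemma exists_nonincreasing_seq_to0 {R : realType} (P : R -> Prop) :
  (forall e, 0 < e -> exists2 h, 0 < h < e & P h) ->
  exists r : R^nat, [/\ forall n, 0 < r n, nonincreasing_seq r,
    r @ \oo --> 0 & forall n, P (r n)].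
Proof.
move=> Psmall.
have /choice[G HG] : forall e : R, exists h, 0 < e -> 0 < h < e /\ P h.
  move=> e; have [e0|e0] := boolP (0 < e).
    by have [h ? ?] := Psmall e e0; exists h.
  by exists 0; rewrite (negbTE e0).
pose r := fix r n := if n is m.+1 then G (Num.min (r m) (harmonic n)) else G (harmonic 0).
have r_step n : 0 < r n -> 0 < r n.+1 < Num.min (r n) (harmonic n.+1) /\ P (r n.+1).
  by move=> rn0; apply: HG; rewrite lt_min rn0 harmonic_gt0.
have r_spec n : [/\ 0 < r n, r n < harmonic n & P (r n)].
  elim: n => [|n [rn0 _ _]]; first by have [/andP[? ?] ?] := HG _ (harmonic_gt0 0).
  by have [/andP[? +] ?] := r_step n rn0; rewrite lt_min => /andP[].
exists r; split => [n|||n]; try by case: (r_spec n).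
- apply/nonincreasing_seqP => n; have [rn0 _ _] := r_spec n.
  by have [/andP[_ +] _] := r_step n rn0; rewrite lt_min => /andP[/ltW].
- apply: (squeeze_cvgr _ (cvg_cst 0) cvg_harmonic).
  by near=> n; have [/ltW -> /ltW ->] := r_spec n.
Unshelve. all: by end_near. Qed.

Lemma density_ratio_ge_half {R : realType} (f : R -> \bar R) :
  (forall h, (0 <= f h)%E) ->
  (forall r : R^nat, (forall n, 0 < r n) -> nonincreasing_seq r -> r @ \oo --> 0 ->
    (fun n => fine (f (r n)) / r n) @ \oo --> (1 : R)) ->
  exists n, forall h, 0 < h < harmonic n -> ((h / 2)%:E <= f h)%E.
Proof.
move=> f0 ratio1; apply: contrapT => /forallNP nolayer.
have small e : 0 < e -> exists2 h, 0 < h < e & (f h < (h / 2)%:E)%E.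
  move=> e0; have [N _ /(_ N (leqnn N)) Ne] := near_infty_natSinv_lt (PosNum e0).
  have /existsNP[h /not_implyP[/andP[h0 hN] /negP]] := nolayer N.
  by rewrite -ltNge => fh; exists h; rewrite // h0 (lt_trans hN Ne).
have [r [r0 rnon rcvg fr]] := exists_nonincreasing_seq_to0 small.
have [N _ /(_ N (leqnn N))] := cvgr_gt _ (ratio1 r r0 rnon rcvg) (1 / 2) ltac:(lra).
have [rN0 frN] := (r0 N, fr N).
have fin : f (r N) \is a fin_num by rewrite ge0_fin_numE ?f0 // (lt_trans frN) ?ltry.
by rewrite ltr_pdivlMr //; rewrite -(fineK fin) lte_fin in frN; lra.
Qed.

Definition left_layer {R : realType} (E : set R) (n : nat) : set R :=
  [set s | forall h, 0 < h < harmonic n -> ((h / 2)%:E <= leb (E `&` `[(s - h)%R, s]))%E].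

Definition right_layer {R : realType} (E : set R) (n : nat) : set R :=
  [set s | forall h, 0 < h < harmonic n -> ((h / 2)%:E <= leb (E `&` `[s, (s + h)%R]))%E].

Lemma left_density_point_layer {R : realType} (E : set R) x :
  left_density_point E x -> exists n, left_layer E n x.
Proof. by apply: density_ratio_ge_half => h; exact: outer_measure_ge0. Qed.

Lemma right_density_point_layer {R : realType} (E : set R) x :
  right_density_point E x -> exists n, right_layer E n x.
Proof. by apply: density_ratio_ge_half => h; exact: outer_measure_ge0. Qed.

Lemma nowhere_dense_subspace {R : numFieldType} (T : pseudoMetricType R) (E : set T)
    (F : set (subspace E)) : F `<=` E ->
  (forall x0 eps, E x0 -> 0 < eps -> ~ (E `&` ball x0 eps `<=` closure (F : set T))) ->
  nowhere_dense F.
Proof.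
move=> FE not_dense; apply/seteqP; split => // x0; rewrite /interior closure_subspaceW //.
move=> /[dup] /nbhs_subspace_singleton [_ Ex0].
case: (@nbhs_subspaceP _ E x0) => // _ /nbhs_ballP[eps /= eps0 ballF].
by apply: (not_dense x0 eps Ex0 eps0) => z [Ez /ballF /(_ Ez) []].
Qed.

Lemma first_category_cover {T : topologicalType} (D : set T) (L : (set T)^nat) :
  D `<=` \bigcup_n L n -> (forall n, nowhere_dense (D `&` L n)) -> first_category D.
Proof.
move=> DU ndL; exists (fun n => D `&` L n); split => //.
apply/seteqP; split => [x Dx | x [n _ []] //].
by have [n _ Lx] := DU x Dx; exists n.
Qed.

Lemma lebesgue_measurable_hull {R : realType} (E : set R) : lebesgue_measurable E ->
  exists A N : set R, [/\ measurable A, measurable N, lebesgue_measure N = 0,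
    E `<=` A & A `\` E `<=` N].
Proof.
rewrite /lebesgue_measurable -completed_caratheodory_measurable.
rewrite g_sigma_completed_algebra_genE => -[A mA [Z [N [mN N0 ZN]] AZE]].
exists (A `|` N), N; split => //; first exact: measurableU.
- by rewrite -AZE => x [Ax|/ZN Nx]; [left|right].
- by move=> x [[Ax|//] []]; rewrite -AZE; left.
Qed.

Section weakly_nowhere_dense.
Context {R : realType} (E : set R).
Hypotheses (mE : lebesgue_measurable E) (wE : weakly_nowhere_dense E).

Lemma weakly_nowhere_dense_avoid_null (N : set R) (a b : R) : leb N = 0%E -> a < b ->
  exists y, [/\ a < y < b, ~ E y & ~ N y].
Proof.
move=> N0 ab; apply: contrapT => none.
have := wE (a := (2 * a + b) / 3) (b := (a + 2 * b) / 3) ltac:(lra).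
apply/negP; rewrite -leNgt -N0; apply: le_outer_measure => x [/= + nEx].
rewrite in_itv /= => /andP[x1 x2]; apply: contrapT => nNx; apply: none.
by exists x; split => //; apply/andP; split; lra.
Qed.

Lemma weakly_nowhere_dense_everywhere_sparse : everywhere_sparse leb E.
Proof.
move=> a b e ab e0.
have [A [N [mA mN N0 EA AEN]]] := lebesgue_measurable_hull mE.
have [M [mM M0 MA]] := lebesgue_density mA.
have MN0 : leb (M `|` N) = 0%E.
  by rewrite -[leb _]/(lebesgue_measure (M `|` N)) measureU0.
have [y [yab nEy nMNy]] := weakly_nowhere_dense_avoid_null MN0 ab.
have nAy : ~ A y by move=> Ay; apply: nMNy; right; apply: AEN.
have dens0 : (lebesgue_measure (A `&` ball y r) * (lebesgue_measure (ball y r))^-1)%E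
    @[r --> 0^'+] --> 0%E.
  have -> : 0%E = (\1_A y)%:E :> \bar R by rewrite indicE memNset.
  by apply: contrapT => ndens; apply: nMNy; left; apply: MA.
move/fine_cvgP : dens0 => [ratio_fin ratio_cvg].
have : \forall r \near 0^'+, [/\ 0 < r, r < 2 * e &
    (lebesgue_measure (A `&` ball y r) * (lebesgue_measure (ball y r))^-1
      <= (1 / 40)%:E)%E].
  near=> r; split.
  - by near: r; exact: nbhs_right_gt.
  - by near: r; apply: nbhs_right_lt; lra.
  - near: r; apply: filterS2 ratio_fin (cvgr_lt _ ratio_cvg (1 / 40) _) => [r fr lr|].
      by rewrite -(fineK fr) lee_fin ltW.
    lra.
move=> /filter_ex [r [r0 r2e]].
rewrite lebesgue_measure_ball ?(ltW r0) // inver mulrn_eq0 /= gt_eqF //.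
rewrite lee_pdivrMr ?mulrn_wgt0 // -EFinM => Ar.
exists y, (r / 2); split => //; first by apply/andP; split; lra.
apply: (@le_trans _ _ (lebesgue_measure (A `&` ball y r))).
  apply: le_outer_measure => x [Ex]; rewrite /= in_itv /= => /andP[x1 x2].
  by split; [exact: EA | rewrite /ball /= ltr_distlC; apply/andP; split; lra].
by apply: (le_trans Ar); rewrite lee_fin mulr2n; lra.
Unshelve. all: by end_near. Qed.

Lemma nowhere_dense_left_layer n : nowhere_dense (DL E `&` left_layer E n).
Proof.
apply: nowhere_dense_subspace => [x [[]] // | x0 eps Ex0 eps0].
apply: (left_layer_not_dense length_bounded_outer_leb (c := harmonic n)) => //.
- exact: harmonic_gt0.
- exact: weakly_nowhere_dense_everywhere_sparse.
- by move=> s [_].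
Qed.

Lemma nowhere_dense_right_layer n : nowhere_dense (DR E `&` right_layer E n).
Proof.
apply: nowhere_dense_subspace => [x [[]] // | x0 eps Ex0 eps0].
apply: (right_layer_not_dense length_bounded_outer_leb (c := harmonic n)) => //.
- exact: harmonic_gt0.
- exact: weakly_nowhere_dense_everywhere_sparse.
- by move=> s [_].
Qed.

End weakly_nowhere_dense.

Theorem theorem3p4 (R : realType) (E : set R) :
  lebesgue_measurable E -> weakly_nowhere_dense E ->
  first_category (DL E) /\ first_category (DR E).
Proof.
move=> mE wE; split.
- apply: (@first_category_cover _ (DL E) (left_layer E)).
    by move=> x [_ /left_density_point_layer[n]]; exists n.
  exact: nowhere_dense_left_layer.
- apply: (@first_category_cover _ (DR E) (right_layer E)).
    by move=> x [_ /right_density_point_layer[n]]; exists n.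
  exact: nowhere_dense_right_layer.
Qed.
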